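(* Let $b,c_1,c_2$ be positive integers and let $N=b+c_1+c_2$. Let $R$ be the map that takes a tableau $T\in\mathrm{SET}(\mathcal{L}^{c_1,c_2}_b)$, replaces each entry $i$ by $N+1-i$, and rotates the result by 180 degrees. Then $R$ is a poset isomorphism from $\mathrm{SET}$ of the right lobster $\mathcal{L}^{c_1,c_2}_b$ (associated to the triple $(b,c_1,c_2)$) to $\mathrm{SET}$ of the left lobster associated to the triple $(b,c_2,c_1)$.
   Context: Rows of skew diagrams are numbered from the bottom. For positive integers $b,c_1,c_2$, the right lobster $\mathcal{L}^{c_1,c_2}_b$ is the skew diagram $\alpha/\beta$ with $\alpha=(b+1+c_2,b+1,b+1+c_1)$, $\beta=(b+1,1,b+1)$: a bottom row of $c_2$ cells in columns $b+2,\ldots,b+1+c_2$, a middle row (body) of $b$ cells in columns $2,\ldots,b+1$, and a top row of $c_1$ cells in columns $b+2,\ldots,b+1+c_1$. The left lobster associated to a triple $(b,c_1,c_2)$ is the three-row skew diagram whose top row has $c_1$ cells and bottom row has $c_2$ cells, both right-justified ending in a common column $m$ (with $m=\max(c_1,c_2)$), and whose middle row (body) has $b$ cells in columns $m+1,\ldots,m+b$; it is the 180-degree rotation of the right lobster with top row $c_2$ and bottom row $c_1$. $\mathrm{SET}$ of a skew shape with $N$ cells is the set of bijective fillings with $1,\ldots,N$ whose rows increase left to right and columns increase bottom to top. For $1\le i\le N-1$, $\pi_i(T)=T$ if $i+1$ is in a strictly higher row than $i$, $\pi_i(T)=s_i(T)$ (swap $i$ and $i+1$) if $i+1$ is in a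 strictly lower row than $i$, and $\pi_i(T)=0$ otherwise; the poset order is $T\le T'$ iff $T'$ is obtained from $T$ by a sequence of operators $\pi_i$ (all intermediate results nonzero). *)

From Stdlib Require Import Relations.
From mathcomp Require Import all_boot.

Set Implicit Arguments.
Unset Strict Implicit.
Unset Printing Implicit Defensive.

(* A cell is (row, column); rows are numbered from the bottom, starting at 1. *)
Definition cell := (nat * nat)%type.

Definition shape := seq cell.

(* The skew diagram alpha/beta, row r (from the bottom, r = 1, 2, ...) being
   the cells in columns beta_r + 1, ..., alpha_r. *)
Definition skew (alpha beta : seq nat) : shape :=
  flatten [seq [seq (r.+1, c) | c <- iota (nth 0 beta r).+1 (nth 0 alpha r - nth 0 beta r)]
          | r <- iota 0 (size alpha)].

Definition right_lobster (b c1 c2 : nat) : shape :=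
  skew [:: b + 1 + c2; b + 1; b + 1 + c1] [:: b + 1; 1; b + 1].

Definition left_lobster (b c1 c2 : nat) : shape :=
  let m := maxn c1 c2 in
  [seq (1, c) | c <- iota (m - c2).+1 c2] ++
  [seq (2, c) | c <- iota m.+1 b] ++
  [seq (3, c) | c <- iota (m - c1).+1 c1].

Definition filling := cell -> nat.

(* Standard (bijective) filling of D with 1..N (N = #cells): rows increase
   left to right, columns increase bottom to top; entries outside D are 0
   (so that a tableau is determined by its values on D). *)
Definition SET (D : shape) (T : filling) : Prop :=
  [/\ uniq D,
      forall x, x \notin D -> T x = 0,
      perm_eq (map T D) (iota 1 (size D)),
      (forall r c c', (r, c) \in D -> (r, c') \in D -> c < c' -> T (r, c) < T (r, c'))
    & (forall r r' c, (r, c) \in D -> (r', c) \in D -> r < r' -> T (r, c) < T (r', c))].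

Definition swap_entries (i : nat) (T : filling) : filling :=
  fun z => if T z == i then i.+1 else if T z == i.+1 then i else T z.

(* pi_step D T T' : T' = pi_i(T) for some 1 <= i <= N-1 with pi_i(T) nonzero:
   pi_i(T) = T if i+1 is in a strictly higher row than i,
   pi_i(T) = s_i(T) if i+1 is in a strictly lower row than i,
   pi_i(T) = 0 otherwise (no step). *)
Definition pi_step (D : shape) (T T' : filling) : Prop :=
  exists i x y, [/\ 1 <= i < size D, x \in D, y \in D, T x = i /\ T y = i.+1 &
    ((x.1 < y.1 /\ T' = T) \/ (y.1 < x.1 /\ T' = swap_entries i T))].

Definition SET_le (D : shape) : relation filling := clos_refl_trans filling (pi_step D).

(* The rotation
   (r, c) |-> (4 - r, max(c1,c2) + b + 2 - c) maps the cells of the right lobster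
   L_b^{c1,c2} onto those of the left lobster of (b, c2, c1). *)
Definition R_map (b c1 c2 : nat) (T : filling) : filling :=
  let N := b + c1 + c2 in
  fun x => if x \in left_lobster b c2 c1
           then N.+1 - T (4 - x.1, maxn c1 c2 + b + 2 - x.2)
           else 0.

From Stdlib Require Import Relations FunctionalExtensionality.
From mathcomp Require Import all_boot zify.

Set Implicit Arguments.
Unset Strict Implicit.
Unset Printing Implicit Defensive.

(** The 180-degree rotation (r, c) |-> (K - r, M - c) of the box [0, K] x [0, M]
    (here K = 4 and M = max(c1, c2) + b + 2) maps the right lobster bijectively
    onto the left lobster with the roles of c1 and c2 exchanged.  Complementing the entries (i |-> N + 1 - i) reverses
    both the row order and the column order, and the rotation reverses them
    back, so standard fillings go to standard fillings.  The same operation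
    sends the cells x, y holding i, i + 1 to cells holding N - i + 1, N - i with
    the relative height of the two rows reversed; hence pi_i corresponds to
    pi_(N-i) and the order is preserved.  Finally the operation is an
    involution, which gives bijectivity and reflection of the order. *)

Definition rotate (K M : nat) (x : cell) : cell := (K - x.1, M - x.2).

Definition in_box (K M : nat) (x : cell) : bool := (x.1 <= K) && (x.2 <= M).

Lemma rotateK_in_box K M x : in_box K M x -> rotate K M (rotate K M x) = x.
Proof. by case: x => r c /andP[/= hr hc]; rewrite /rotate /= !subKn. Qed.

Definition complement_rotate (K M N : nat) (D' : seq cell) (T : filling) : filling :=
  fun x => if x \in D' then N.+1 - T (rotate K M x) else 0.

Lemma complement_rotate_in K M N D' T x :
  x \in D' -> complement_rotate K M N D' T x = N.+1 - T (rotate K M x).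
Proof. by rewrite /complement_rotate => ->. Qed.

Lemma complement_rotate_swap K M N D' T i : i < N ->
  complement_rotate K M N D' (swap_entries i T)
  = swap_entries (N - i) (complement_rotate K M N D' T).
Proof.
move=> iN; apply: functional_extensionality => x.
rewrite /complement_rotate /swap_entries.
by case: (x \in D'); repeat case: eqP => ? //=; lia.
Qed.

Record rotation_dual (K M : nat) (D D' : seq cell) : Prop := RotationDual {
  rd_uniq : uniq D;
  rd_uniq' : uniq D';
  rd_box : {in D, forall x, in_box K M x};
  rd_box' : {in D', forall x, in_box K M x};
  rd_rotate : {in D, forall x, rotate K M x \in D'};
  rd_rotate' : {in D', forall x, rotate K M x \in D} }.

Lemma rotation_dual_sym K M D D' : rotation_dual K M D D' -> rotation_dual K M D' D.
Proof. by case=> *; split. Qed.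

Lemma SET_entry_bound D T x : SET D T -> x \in D -> 0 < T x <= size D.
Proof.
case=> _ _ permT _ _ xD.
by have := map_f T xD; rewrite (perm_mem permT) mem_iota; lia.
Qed.

Lemma perm_complement_iota N : perm_eq [seq N.+1 - v | v <- iota 1 N] (iota 1 N).
Proof.
apply: uniq_perm; rewrite ?iota_uniq //.
- by rewrite map_inj_in_uniq ?iota_uniq // => p q; rewrite !mem_iota; lia.
move=> v; apply/mapP/idP => [[w + ->]|]; rewrite !mem_iota; first lia.
by move=> vN; exists (N.+1 - v); rewrite ?mem_iota; lia.
Qed.

Section ComplementRotate.

Variables (K M : nat) (D D' : seq cell).
Hypothesis dual : rotation_dual K M D D'.

Let rotateK x : x \in D -> rotate K M (rotate K M x) = x.
Proof. by move=> xD; rewrite rotateK_in_box // (rd_box dual). Qed.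

Let rotateK' x : x \in D' -> rotate K M (rotate K M x) = x.
Proof. by move=> xD'; rewrite rotateK_in_box // (rd_box' dual). Qed.

Lemma perm_map_rotate : perm_eq (map (rotate K M) D') D.
Proof.
apply: uniq_perm; rewrite ?(rd_uniq dual) //.
  by rewrite map_inj_in_uniq ?(rd_uniq' dual) // => p q pD qD /(congr1 (rotate K M));
     rewrite !rotateK'.
move=> z; apply/mapP/idP => [[w wD' ->]|zD]; first exact: (rd_rotate' dual).
by exists (rotate K M z); rewrite ?rotateK ?(rd_rotate dual).
Qed.

Lemma size_rotation_dual : size D' = size D.
Proof. by rewrite -(perm_size perm_map_rotate) size_map. Qed.

Variables (N : nat) (T : filling).
Hypothesis size_D : size D = N.

Notation T' := (complement_rotate K M N D' T).

Lemma SET_complement_rotate : SET D T -> SET D' T'.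
Proof.
move=> ST; have [_ _ permT rowT colT] := ST.
have boundT x : x \in D' -> 0 < T (rotate K M x) <= N.
  by move=> /(rd_rotate' dual) /(SET_entry_bound ST); rewrite size_D.
split; first exact: (rd_uniq' dual).
- by move=> x /negbTE xD'; rewrite /complement_rotate xD'.
- have -> : map T' D' = [seq N.+1 - v | v <- map T (map (rotate K M) D')].
    by rewrite -!map_comp; apply/eq_in_map => x /complement_rotate_in.
  rewrite size_rotation_dual size_D; apply: perm_trans (perm_complement_iota N).
  by apply/perm_map; rewrite -size_D; apply: perm_trans permT; apply/perm_map/perm_map_rotate.
- move=> r c c' x1 x2 lt_cc'; rewrite !complement_rotate_in //.
  have := rd_box' dual x2; have := boundT _ x1; have := boundT _ x2.
  have := rowT _ _ _ (rd_rotate' dual x2) (rd_rotate' dual x1).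
  by rewrite /rotate /in_box /=; lia.
- move=> r r' c x1 x2 lt_rr'; rewrite !complement_rotate_in //.
  have := rd_box' dual x2; have := boundT _ x1; have := boundT _ x2.
  have := colT _ _ _ (rd_rotate' dual x2) (rd_rotate' dual x1).
  by rewrite /rotate /in_box /=; lia.
Qed.

Lemma complement_rotateK : SET D T -> complement_rotate K M N D T' = T.
Proof.
move=> ST; apply: functional_extensionality => x; rewrite /complement_rotate.
case: (boolP (x \in D)) => [xD|xD]; last by have [_ T0 _ _ _] := ST; rewrite T0.
rewrite (rd_rotate dual xD) rotateK //.
by have := SET_entry_bound ST xD; rewrite size_D; lia.
Qed.

End ComplementRotate.

Section Order.

Variables (K M N : nat) (D D' : seq cell).
Hypotheses (dual : rotation_dual K M D D') (size_D : size D = N).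

Lemma pi_step_complement_rotate T1 T2 : pi_step D T1 T2 ->
  pi_step D' (complement_rotate K M N D' T1) (complement_rotate K M N D' T2).
Proof.
case=> i [[xr xc] [[yr yc] [/andP[i_gt0 iN] xD yD [T1x T1y] moves]]].
rewrite size_D in iN.
have [xbox ybox] := (rd_box dual xD, rd_box dual yD).
have [/andP[/= xK _] /andP[/= yK _]] := (xbox, ybox).
exists (N - i), (rotate K M (yr, yc)), (rotate K M (xr, xc)).
rewrite (size_rotation_dual dual) size_D !(rd_rotate dual) //.
rewrite !complement_rotate_in ?(rd_rotate dual) ?rotateK_in_box // T1x T1y.
split=> //; try lia.
case: moves => [[/= lt_xy ->]|[/= lt_yx ->]]; [left|right];
  rewrite ?complement_rotate_swap //; split=> //=; lia.
Qed.

Lemma SET_le_complement_rotate T1 T2 : SET_le D T1 T2 ->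
  SET_le D' (complement_rotate K M N D' T1) (complement_rotate K M N D' T2).
Proof.
elim=> [? ? /pi_step_complement_rotate|?|? ? ? _ le12 _ le23].
- exact: rt_step.
- exact: rt_refl.
- exact: rt_trans le12 le23.
Qed.

End Order.

Lemma mem_iota_row (k a n r c : nat) :
  ((r, c) \in [seq (k, c) | c <- iota a n]) = (r == k) && (a <= c < a + n).
Proof.
apply/mapP/andP => [[c' + [-> ->]]|[/eqP -> ca]]; first by rewrite mem_iota.
by exists c; rewrite ?mem_iota.
Qed.

Lemma uniq_three_rows (a1 n1 a2 n2 a3 n3 : nat) :
  uniq ([seq (1, c) | c <- iota a1 n1] ++ [seq (2, c) | c <- iota a2 n2]
        ++ [seq (3, c) | c <- iota a3 n3]).
Proof.
have uniq_row k a n : uniq [seq (k, c) | c <- iota a n].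
  by rewrite map_inj_uniq ?iota_uniq // => ? ? [].
rewrite !cat_uniq !uniq_row /= !has_cat !negb_or !andbT.
by repeat (apply/andP; split); apply/hasPn => z /mapP [c _ ->]; rewrite mem_iota_row.
Qed.

Lemma right_lobster_rows b c1 c2 : right_lobster b c1 c2 =
  [seq (1, c) | c <- iota b.+2 c2] ++ [seq (2, c) | c <- iota 2 b]
  ++ [seq (3, c) | c <- iota b.+2 c1].
Proof. by rewrite /right_lobster /skew /= cats0 addn1 !addKn subn1. Qed.

Lemma mem_right_lobster b c1 c2 r c : ((r, c) \in right_lobster b c1 c2) =
  [|| (r == 1) && (b.+2 <= c < b.+2 + c2), (r == 2) && (2 <= c < 2 + b)
    | (r == 3) && (b.+2 <= c < b.+2 + c1)].
Proof. by rewrite right_lobster_rows !mem_cat !mem_iota_row. Qed.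

Lemma mem_left_lobster b c1 c2 r c : ((r, c) \in left_lobster b c1 c2) =
  [|| (r == 1) && (maxn c1 c2 - c2 < c <= maxn c1 c2),
      (r == 2) && (maxn c1 c2 < c <= maxn c1 c2 + b)
    | (r == 3) && (maxn c1 c2 - c1 < c <= maxn c1 c2)].
Proof. by rewrite /left_lobster !mem_cat !mem_iota_row; lia. Qed.

Lemma size_right_lobster b c1 c2 : size (right_lobster b c1 c2) = b + c1 + c2.
Proof. by rewrite right_lobster_rows !size_cat !size_map !size_iota; lia. Qed.

Lemma rotation_dual_lobsters b c1 c2 :
  rotation_dual 4 (maxn c1 c2 + b + 2) (right_lobster b c1 c2) (left_lobster b c2 c1).
Proof.
split; rewrite ?right_lobster_rows; try exact: uniq_three_rows.
all: by case=> r c; rewrite -?right_lobster_rows /rotate /in_box /=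
       ?mem_right_lobster ?mem_left_lobster; lia.
Qed.

Theorem lemma5p3 (b c1 c2 : nat) (hb : 0 < b) (hc1 : 0 < c1) (hc2 : 0 < c2) :
  let D := right_lobster b c1 c2 in
  let D' := left_lobster b c2 c1 in
  [/\ (forall T, SET D T -> SET D' (R_map b c1 c2 T)),
      (forall T1 T2, SET D T1 -> SET D T2 -> R_map b c1 c2 T1 = R_map b c1 c2 T2 -> T1 = T2),
      (forall T', SET D' T' -> exists2 T, SET D T & R_map b c1 c2 T = T')
    & (forall T1 T2, SET D T1 -> SET D T2 ->
         (SET_le D T1 T2 <-> SET_le D' (R_map b c1 c2 T1) (R_map b c1 c2 T2)))].
Proof.
move=> D D'; set M := maxn c1 c2 + b + 2; set N := b + c1 + c2.
have dual : rotation_dual 4 M D D' := rotation_dual_lobsters b c1 c2.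
have dual' := rotation_dual_sym dual.
have size_D : size D = N := size_right_lobster b c1 c2.
have size_D' : size D' = N by rewrite (size_rotation_dual dual).
have -> : R_map b c1 c2 = complement_rotate 4 M N D' by [].
have RK T : SET D T -> complement_rotate 4 M N D (complement_rotate 4 M N D' T) = T.
  exact: complement_rotateK.
split.
- by move=> T; apply: (SET_complement_rotate dual size_D).
- by move=> T1 T2 ST1 ST2 eqR; rewrite -(RK _ ST1) -(RK _ ST2) eqR.
- move=> T' ST'; exists (complement_rotate 4 M N D T').
    exact: (SET_complement_rotate dual' size_D' ST').
  exact: (complement_rotateK dual' size_D' ST').
- move=> T1 T2 ST1 ST2; split; first exact: (SET_le_complement_rotate dual size_D).
  by rewrite -{2}(RK _ ST1) -{2}(RK _ ST2); apply: (SET_le_complement_rotate dual' size_D').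
Qed.
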